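(* Let $E$ be a finite set and let $S$ be a powerful multiset over $E$ with indicator function $f:2^E\to\mathbb{Z}_{\ge0}$ (with $f(\emptyset)\neq 0$). Then for every $X\subseteq E$, $f(\emptyset)$ divides $f(X)$.
   Context: A multiset over $E$ is a collection of subsets of $E$ with repetition; its indicator function $f$ assigns to each $X\subseteq E$ its multiplicity. Assuming $f(\emptyset)\neq 0$, its rank function is $r_S(X)=\log_2\Big(\sum_{Y\subseteq E} f(Y)\big/\sum_{Y\subseteq E\setminus X} f(Y)\Big)$, and $S$ is a powerful multiset if $r_S(X)$ is an integer for every $X\subseteq E$. *)

From mathcomp Require Import all_boot.
From Stdlib Require Import Reals.
Set Implicit Arguments. Unset Strict Implicit. Unset Printing Implicit Defensive.

Definition total_mass (E : finType) (f : {set E} -> nat) : nat :=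
  \sum_(Y : {set E}) f Y.

Definition avoid_mass (E : finType) (f : {set E} -> nat) (X : {set E}) : nat :=
  \sum_(Y : {set E} | Y \subset ~: X) f Y.

Definition log2 (x : R) : R := (ln x / ln 2)%R.

Definition rank_ms (E : finType) (f : {set E} -> nat) (X : {set E}) : R :=
  log2 (INR (total_mass f) / INR (avoid_mass f X))%R.

Definition is_integer (r : R) : Prop := exists z : Z, r = IZR z.

Definition powerful (E : finType) (f : {set E} -> nat) : Prop :=
  forall X : {set E}, is_integer (rank_ms f X).

(** The ratio [total_mass f / avoid_mass f (~: X)] is the total mass divided by
    [g X := \sum_(Y \subset X) f Y]; being powerful, it is a power of two.
    Comparing [X] with [set0], [g X] and [g set0 = f set0] are both the total
    mass divided by a power of two, and [g set0 <= g X], so [f set0] divides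
    every [g X].  Inverting the summation over subsets by induction on [#|X|]
    (Möbius inversion, without signs) then gives [f set0 %| f X]. *)
From mathcomp Require Import all_boot.
From Stdlib Require Import Reals Lra.

Set Implicit Arguments.
Unset Strict Implicit.
Unset Printing Implicit Defensive.

Lemma INR_expn (m n : nat) : INR (expn m n) = pow (INR m) n.
Proof. by elim: n => [|n IHn] //=; rewrite expnS mult_INR IHn. Qed.

Lemma log2_eq_IZR (x : R) (z : Z) :
  (0 < x)%R -> log2 x = IZR z -> x = Rpower 2 (IZR z).
Proof.
move=> x_gt0; rewrite /log2 /Rpower => <-.
have ln2_gt0 : (0 < ln 2)%R by rewrite -ln_1; apply: ln_increasing; lra.
by rewrite /Rdiv Rmult_assoc Rinv_l ?Rmult_1_r ?exp_ln //; lra.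
Qed.

Lemma log2_ratio_IZR (T A : nat) (z : Z) :
  (0 < A <= T)%N -> log2 (INR T / INR A) = IZR z -> exists n, T = (A * expn 2 n)%N.
Proof.
case/andP=> /ltP A_gt0 /leP le_AT log2E.
have INR_A_gt0 : (0 < INR A)%R by apply: lt_0_INR.
have ratio_ge1 : (1 <= INR T / INR A)%R.
  apply: (Rmult_le_reg_r (INR A)) => //.
  by rewrite Rmult_1_l /Rdiv Rmult_assoc Rinv_l ?Rmult_1_r; [apply: le_INR | lra].
have ratioE := @log2_eq_IZR (INR T / INR A) z ltac:(lra) log2E.
have z_ge0 : (0 <= z)%Z.
  apply: le_IZR; apply: Rnot_lt_le => z_lt0.
  have := Rpower_lt 2 _ _ (ltac:(lra) : (1 < 2)%R) z_lt0.
  rewrite Rpower_O -?ratioE; lra.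
exists (Z.to_nat z); apply: INR_eq.
rewrite mult_INR INR_expn (_ : INR 2 = 2%R); last by rewrite /=; lra.
rewrite -Rpower_pow; last lra.
rewrite [INR (Z.to_nat z)]INR_IZR_INZ Znat.Z2Nat.id // -ratioE; field; lra.
Qed.

Lemma dvdn_of_mul_pow2 (a b m n : nat) :
  (0 < b <= a)%N -> (a * expn 2 m = b * expn 2 n)%N -> (b %| a)%N.
Proof.
case/andP=> b_gt0 le_ba eq_ab.
have le_mn : (m <= n)%N.
  rewrite -(leq_exp2l m n (isT : 1 < 2)%N) -(leq_pmul2l b_gt0) -eq_ab.
  by rewrite leq_mul2r le_ba orbT.
have -> : a = (b * expn 2 (n - m))%N.
  apply/eqP; rewrite -(eqn_pmul2r (expn_gt0 2 m)) eq_ab.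
  by rewrite -mulnA -expnD subnK.
exact: dvdn_mulr.
Qed.

Section SubsetSums.

Variable E : finType.
Implicit Types (f : {set E} -> nat) (X Y : {set E}).

Definition subset_mass f X : nat := \sum_(Y : {set E} | Y \subset X) f Y.

Lemma avoid_massC f X : avoid_mass f (~: X) = subset_mass f X.
Proof. by rewrite /avoid_mass setCK. Qed.

Lemma subset_mass0 f : subset_mass f set0 = f set0.
Proof.
rewrite /subset_mass (eq_bigl (pred1 set0)) ?big_pred1_eq // => Y.
by rewrite /= subset0.
Qed.

Lemma f0_le_subset_mass f X : (f set0 <= subset_mass f X)%N.
Proof. by rewrite /subset_mass (bigD1 set0) ?sub0set //= leq_addr. Qed.

Lemma subset_mass_le_total f X : (subset_mass f X <= total_mass f)%N.
Proof.
rewrite /subset_mass /total_mass big_mkcond /=.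
by apply: leq_sum => Y _; case: ifP.
Qed.

Lemma dvdn_of_dvdn_subset_mass f (d : nat) :
  (forall X, d %| subset_mass f X)%N -> forall X, (d %| f X)%N.
Proof.
move=> d_subset_mass X; elim: {X}_.+1 {-2}X (ltnSn #|X|) => // k IHk X ltXk.
have := d_subset_mass X; rewrite /subset_mass (bigD1 X) //= dvdn_addl //.
apply: dvdn_sum => Y /andP[sub_YX neq_YX]; apply: IHk.
rewrite -ltnS (leq_trans _ ltXk) // ltnS proper_card //.
by rewrite properEneq neq_YX sub_YX.
Qed.

Lemma powerful_total_mass f :
  f set0 <> 0%N -> powerful f ->
  forall X, exists n, total_mass f = (subset_mass f X * expn 2 n)%N.
Proof.
move=> /eqP; rewrite -lt0n => f0_gt0 powerful_f X.
have [z] := powerful_f (~: X).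
rewrite /rank_ms avoid_massC; apply: log2_ratio_IZR.
by rewrite (leq_trans f0_gt0 (f0_le_subset_mass f X)) subset_mass_le_total.
Qed.

End SubsetSums.

Theorem theorem5 (E : finType) (f : {set E} -> nat) :
  f set0 <> 0%N -> powerful f -> forall X : {set E}, (f set0 %| f X)%N.
Proof.
move=> f0_neq0 powerful_f; apply: dvdn_of_dvdn_subset_mass => X.
have [m totalE] := powerful_total_mass f0_neq0 powerful_f X.
have [n] := powerful_total_mass f0_neq0 powerful_f set0.
rewrite subset_mass0 totalE => eq_mn.
apply: (dvdn_of_mul_pow2 _ eq_mn).
by rewrite lt0n f0_le_subset_mass andbT; apply/eqP.
Qed.
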